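(* Let $R$ be a $*$-ring and $C(R)=\{a\in R\mid ax=xa \text{ for all } x\in R\}$ its center, regarded as a $*$-ring with the restricted involution. Then $R$ is strongly $J$-$*$-clean if and only if (1) $C(R)$ is $J$-$*$-clean, and (2) $R=C(R)+J(R)$.
   Context: All rings are associative with identity. A $*$-ring is a ring $R$ with an involution $*$, i.e. a map $a\mapsto a^*$ with $(a+b)^*=a^*+b^*$, $(ab)^*=b^*a^*$, $(a^* )^*=a$; the center $C(R)$ is closed under $*$. $J(S)$ denotes the Jacobson radical of a ring $S$. A projection is an element $e$ with $e^2=e=e^*$. $R$ is strongly $J$-$*$-clean if every $a\in R$ can be written $a=e+u$ with $e$ a projection, $u\in J(R)$ and $ae=ea$. A $*$-ring $S$ is $J$-$*$-clean if every element of $S$ is the sum of a projection of $S$ and an element of $J(S)$ (no commutation required). *)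

From mathcomp Require Import all_boot all_algebra.
Set Implicit Arguments. Unset Strict Implicit. Unset Printing Implicit Defensive.
Import GRing.Theory.
Local Open Scope ring_scope.

Definition is_involution (R : pzRingType) (s : R -> R) : Prop :=
  (forall a b : R, s (a + b) = s a + s b) /\
  (forall a b : R, s (a * b) = s b * s a) /\
  (forall a : R, s (s a) = a).

Definition central (R : pzRingType) (a : R) : Prop := forall x : R, a * x = x * a.

(* Subrings are given as predicates S : R -> Prop (we use S = whole ring and
   S = center).  [unit_in S a]: a is invertible in the ring S. *)
Definition unit_in (R : pzRingType) (S : R -> Prop) (a : R) : Prop :=
  exists2 y, S y & (y * a = 1 /\ a * y = 1).

Definition jacobson_in (R : pzRingType) (S : R -> Prop) (a : R) : Prop :=
  S a /\ forall x : R, S x -> unit_in S (1 - x * a).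

Definition whole (R : pzRingType) : R -> Prop := fun _ => True.

Definition jacobson (R : pzRingType) (a : R) : Prop := jacobson_in (@whole R) a.

Definition projection (R : pzRingType) (s : R -> R) (e : R) : Prop :=
  e * e = e /\ s e = e.

Definition strongly_J_star_clean (R : pzRingType) (s : R -> R) : Prop :=
  forall a : R, exists e u : R,
    [/\ projection s e, jacobson u, a = e + u & a * e = e * a].

Definition center_J_star_clean (R : pzRingType) (s : R -> R) : Prop :=
  forall a : R, central a -> exists e u : R,
    [/\ central e, projection s e, jacobson_in (@central R) u & a = e + u].

Definition center_plus_jacobson (R : pzRingType) : Prop :=
  forall a : R, exists c u : R, [/\ central c, jacobson u & a = c + u].

(* An idempotent a of a strongly J-*-clean ring is a projection: writing
   a = e + u with e a projection commuting with a, the difference u = a - e of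
   two commuting idempotents satisfies u^3 = u, and a tripotent element of J(R)
   is 0.  Applied to the idempotent p + p x (1 - p) for a projection p, this
   forces p x (1 - p) = 0 for all x, hence every projection is central.  So the
   decompositions a = e + u of central elements live in C(R), and conversely
   when R = C(R) + J(R) the radical J(C(R)) is contained in J(R). *)

From mathcomp Require Import all_boot all_algebra.
Set Implicit Arguments. Unset Strict Implicit. Unset Printing Implicit Defensive.
Import GRing.Theory.
Local Open Scope ring_scope.

Section StarRing.
Variable R : pzRingType.
Implicit Types a b e u x y : R.

Lemma unit_in_wholeM a b :
  unit_in (@whole R) a -> unit_in (@whole R) b -> unit_in (@whole R) (a * b).
Proof.
move=> [ya _ [ya1 ay1]] [yb _ [yb1 by1]]; exists (yb * ya) => //; split.
- by rewrite mulrA -(mulrA yb) ya1 mulr1.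
- by rewrite mulrA -(mulrA a) by1 mulr1.
Qed.

Lemma unit_in_whole_mulIr0 x y :
  unit_in (@whole R) y -> x * y = 0 -> x = 0.
Proof. by move=> [z _ [_ yz1]] xy0; rewrite -(mulr1 x) -yz1 mulrA xy0 mul0r. Qed.

Lemma jacobson_mull y u : jacobson u -> jacobson (y * u).
Proof. by move=> [_ Ju]; split=> // x _; rewrite mulrA; apply: Ju. Qed.

Lemma jacobsonD a b : jacobson a -> jacobson b -> jacobson (a + b).
Proof.
move=> [_ Ja] Jb; split=> // x _.
have [w _ [_ w1]] := Ja x I.
have -> : 1 - x * (a + b) = (1 - x * a) * (1 - (w * x) * b).
  by rewrite mulrBr mulr1 !mulrA w1 mul1r mulrDr opprD addrA.
apply: unit_in_wholeM; first exact: Ja.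
by have [_ Jwxb] := jacobson_mull (w * x) Jb; rewrite -(mul1r (_ * b)); apply: Jwxb.
Qed.

Lemma jacobson_tripotent_eq0 u : jacobson u -> u * u * u = u -> u = 0.
Proof.
move=> [_ Ju] u3; apply: (@unit_in_whole_mulIr0 u (1 - u * u)); first exact: Ju.
by rewrite mulrBr mulr1 mulrA u3 subrr.
Qed.

Lemma commuting_idempotents_subr_tripotent a e :
  a * a = a -> e * e = e -> a * e = e * a ->
  (a - e) * (a - e) * (a - e) = a - e.
Proof.
move=> aa ee ae.
have aea : a * e * a = a * e by rewrite -mulrA -ae mulrA aa.
have aee : a * e * e = a * e by rewrite -mulrA ee.
have sq : (a - e) * (a - e) = a + e - (a * e) *+ 2.
  by rewrite mulrBl !mulrBr aa ee -ae mulr2n opprB addrACA opprD.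
rewrite sq mulrBr !mulrBl !mulrDl aa ee -ae aea aee.
by rewrite opprB subrKA addrKA.
Qed.

Lemma centralB a b : central a -> central b -> central (a - b).
Proof. by move=> ca cb x; rewrite mulrBl mulrBr ca cb. Qed.

Lemma centralM a b : central a -> central b -> central (a * b).
Proof. by move=> ca cb x; rewrite -mulrA cb mulrA ca mulrA. Qed.

Lemma central1 : central (1 : R).
Proof. by move=> x; rewrite mul1r mulr1. Qed.

Lemma central_inv a y : central a -> y * a = 1 -> a * y = 1 -> central y.
Proof.
move=> ca ya1 ay1 z.
by rewrite -[y * z]mulr1 -ay1 mulrA -[y * z * a]mulrA -ca mulrA ya1 mul1r.
Qed.

Lemma jacobson_central_in_center u :
  central u -> jacobson u -> jacobson_in (@central R) u.
Proof.
move=> cu [_ Ju]; split=> // x cx.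
have [y _ [y1 y2]] := Ju x I; exists y => //.
by apply: central_inv y1 y2; apply: centralB central1 (centralM cx cu).
Qed.

Lemma center_jacobson_sub_jacobson u :
  center_plus_jacobson R -> jacobson_in (@central R) u -> jacobson u.
Proof.
move=> RCJ [cu Ju]; split=> // x _.
have [c [j [cc Jj ->]]] := RCJ x.
have [w _ [w1 w2]] := Ju c cc.
have -> : 1 - (c + j) * u = (1 - c * u) * (1 - (w * u) * j).
  by rewrite mulrBr mulr1 !mulrA w2 mul1r mulrDl (cu j) opprD addrA.
apply: unit_in_wholeM; first by exists w.
by have [_ Jj'] := Jj; apply: Jj'.
Qed.

Variable s : R -> R.
Hypothesis hs : is_involution s.

Lemma involution0 : s 0 = 0.
Proof.
have [sD _] := hs; apply: (@addrI _ (s 0)).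
by rewrite addr0 -sD addr0.
Qed.

Lemma involutionN a : s (- a) = - s a.
Proof. by have [sD _] := hs; apply/eqP; rewrite -subr_eq0 opprK -sD addNr involution0. Qed.

Lemma involution1 : s 1 = 1.
Proof. by have [_ [sM sK]] := hs; have := sM (s 1) 1; rewrite mulr1 !sK mulr1. Qed.

Hypothesis sc : strongly_J_star_clean s.

Lemma idempotent_projection a : a * a = a -> projection s a.
Proof.
move=> aa; have [e [u [[ee se] Ju aeu ae]]] := sc a.
have u_def : u = a - e by rewrite aeu addrC addKr.
have u0 : u = 0.
  apply: jacobson_tripotent_eq0 => //.
  by rewrite u_def; apply: commuting_idempotents_subr_tripotent.
by split=> //; rewrite aeu u0 addr0.
Qed.

Lemma projection_corner_eq0 p x : projection s p -> p * x * (1 - p) = 0.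
Proof.
move=> [pp sp]; have [sD [sM _]] := hs.
set q := p * x * (1 - p).
have p1p : p * (1 - p) = 0 by rewrite mulrBr mulr1 pp subrr.
have pq : p * q = q by rewrite /q !mulrA pp.
have qp : q * p = 0 by rewrite /q -mulrA mulrBl mul1r pp subrr mulr0.
have sq : s q = q.
  have qq : q * q = 0 by rewrite -{2}pq mulrA qp mul0r.
  have [_] : projection s (p + q).
    by apply: idempotent_projection; rewrite mulrDl !mulrDr pp pq qp qq !addr0.
  by rewrite sD sp => /addrI.
by rewrite -pq -sq /q !sM sp sD involutionN involution1 sp !mulrA p1p !mul0r.
Qed.

Lemma projection_central p : projection s p -> central p.
Proof.
move=> Pp x; have [_ [sM sK]] := hs; have [_ sp] := Pp.
have corner y : p * y = p * y * p.
  by apply/eqP; rewrite -subr_eq0 -{1}(mulr1 (p * y)) -mulrBr projection_corner_eq0.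
have := congr1 s (corner (s x)).
by rewrite !sM sK sp mulrA => ->; rewrite -corner.
Qed.

End StarRing.

Theorem corollary2p3 (R : pzRingType) (s : R -> R) (hs : is_involution s) :
  strongly_J_star_clean s <->
  (center_J_star_clean s /\ center_plus_jacobson R).
Proof.
split=> [sc | [CJ RCJ] a].
- split=> [a ca | a]; have [e [u [Pe Ju aeu ae]]] := sc a;
    have ce := projection_central hs sc Pe.
  + have u_def : u = a - e by rewrite aeu addrC addKr.
    have cu : central u by rewrite u_def; apply: centralB.
    by exists e, u; split=> //; apply: jacobson_central_in_center.
  + by exists e, u.
- have [c [j [cc Jj ->]]] := RCJ a.
  have [e [v [ce Pe Jv ->]]] := CJ c cc.
  exists e, (v + j); split=> //; last by rewrite addrA.
  exact: jacobsonD (center_jacobson_sub_jacobson RCJ Jv) Jj.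
Qed.
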